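(* Let $r,c\ge1$, $n=r+c$, $X_1,X_2$ as below, and $1\le K\le 2^{\min(r,c)}$. Let $\varphi$ be uniformly random among permutations of $\{0,1\}^n$ with exactly $K$ $X$-pairs. Any quantum algorithm making $T$ queries to $\varphi$ and $\varphi^{-1}$ that outputs an $X$-pair of $\varphi$ with probability $\epsilon>0$ satisfies $$\epsilon\le\frac{8(T+1)^2K}{2^{\min(r,c)}}.$$
   Context: $X_1\subset\{0,1\}^n$ is the set of strings ending in $0^c$, $X_2\subset\{0,1\}^n$ the set of strings beginning with $0^r$; an $X$-pair of $\varphi$ is $(x,y)\in X_1\times X_2$ with $\varphi(x)=y$. Queries are to the unitaries $O_\varphi:|a\rangle|b\rangle\mapsto|a\rangle|b\oplus\varphi(a)\rangle$ and $O_{\varphi^{-1}}:|a\rangle|b\rangle\mapsto|a\rangle|b\oplus\varphi^{-1}(a)\rangle$; success probability is over $\varphi$ and the algorithm's randomness and measurements. *)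

From HB Require Import structures.
From mathcomp Require Import all_boot all_order fingroup perm all_algebra.
From mathcomp Require Import complex.
Set Implicit Arguments. Unset Strict Implicit. Unset Printing Implicit Defensive.
Import Order.TTheory GRing.Theory Num.Theory.
Local Open Scope ring_scope.

Definition bs (n : nat) := (n.-tuple bool)%type.

Definition bxor n (x y : bs n) : bs n := [tuple xorb (tnth x i) (tnth y i) | i < n].

Definition inX1 (r c : nat) (x : bs (r + c)) : bool := drop r x == nseq c false.
Definition inX2 (r c : nat) (y : bs (r + c)) : bool := take r y == nseq r false.

Definition Xpair (r c : nat) (phi : {perm bs (r + c)}) (xy : bs (r + c) * bs (r + c)) : bool :=
  [&& inX1 xy.1, inX2 xy.2 & phi xy.1 == xy.2].

Definition numXpairs (r c : nat) (phi : {perm bs (r + c)}) : nat :=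
  #|[set x : bs (r + c) | inX1 x && inX2 (phi x)]|.

(* Computational basis of the full register: control qubit (which oracle),
   query input |a>, query output |b>, and workspace W. *)
Definition basis (n : nat) (W : finType) : finType := (bool * bs n * bs n * W)%type.

Definition op (R : rcfType) (B : finType) := B -> B -> R[i].
Definition state (R : rcfType) (B : finType) := B -> R[i].

Definition apply_op (R : rcfType) (B : finType) (A : op R B) (v : state R B) : state R B :=
  fun x => \sum_(y : B) A x y * v y.

Definition unitary (R : rcfType) (B : finType) (A : op R B) : Prop :=
  forall x y : B, \sum_(z : B) (conjc (A z x)) * A z y = (x == y)%:R.

Definition oracle_map n (W : finType) (phi : {perm bs n}) (x : basis n W) : basis n W :=
  let: (ct, a, b, w) := x in
  (ct, a, bxor b (if ct then (phi^-1)%g a else phi a), w).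

Definition oracle_op (R : rcfType) n (W : finType) (phi : {perm bs n}) : op R (basis n W) :=
  fun x y => (x == oracle_map phi y)%:R.

(* A T-query quantum algorithm with workspace W: start in a basis state,
   apply U_0, query, U_1, query, ..., query, U_T, then measure in the
   computational basis and classically post-process the outcome into a
   candidate pair (x, y). *)
Record qalg (R : rcfType) (n : nat) (W : finType) (T : nat) := QAlg {
  init : basis n W;
  U : nat -> op R (basis n W);
  U_unitary : forall i, (i <= T)%N -> unitary (U i);
  outp : basis n W -> bs n * bs n
}.

Definition delta (R : rcfType) (B : finType) (b0 : B) : state R B :=
  fun x => (x == b0)%:R.

Fixpoint run (R : rcfType) n (W : finType) T (A : qalg R n W T) (phi : {perm bs n}) (k : nat)
  : state R (basis n W) :=
  match k with
  | 0 => apply_op (U A 0) (delta R (init A))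
  | k'.+1 => apply_op (U A k) (apply_op (@oracle_op R n W phi) (run A phi k'))
  end.

Definition sqnorm (R : rcfType) (z : R[i]) : R := complex.Re z ^+ 2 + complex.Im z ^+ 2.

Definition succ_prob (R : rcfType) (r c : nat) (W : finType) T (A : qalg R (r + c) W T)
  (phi : {perm bs (r + c)}) : R :=
  \sum_(x : basis (r + c) W | Xpair phi (outp A x)) sqnorm (run A phi T x).

Definition avg_succ_prob (R : rcfType) (r c K : nat) (W : finType) T (A : qalg R (r + c) W T) : R :=
  (\sum_(phi : {perm bs (r + c)} | numXpairs phi == K) succ_prob A phi)
  / #|[set phi : {perm bs (r + c)} | numXpairs phi == K]|%:R.

From HB Require Import structures.
From mathcomp Require Import all_boot all_order fingroup perm all_algebra.
From mathcomp Require Import complex ring lra zify.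
Import Order.TTheory GRing.Theory Num.Theory.
Local Open Scope ring_scope.
Set Implicit Arguments. Unset Strict Implicit. Unset Printing Implicit Defensive.

(* Swapping the images of x and z turns a permutation g with K - 1 X-pairs, in
   which x in X1 is mapped outside X2 and z outside X1 is mapped into X2, into a
   permutation with the extra X-pair (x, g z); every permutation with K X-pairs
   arises this way exactly Z times per X-pair, Z being the number of points
   outside X1 mapped outside X2.  Hence the average success probability is
   controlled by the probability of outputting (x, g z) when the oracle is the
   swapped permutation, averaged over g and the admissible pairs (x, z).  The
   swap only changes the answers to queries on x, z, g x, g z, so the hybrid
   argument bounds that probability by twice the probability of outputting
   (x, g z) with oracle g, plus 8 T times the total query weight of x and z.
   Summed over all pairs these contribute at most 2 and 8 T^2 2^(max r c), and
   the double counting Z K N_K = N_(K-1) (2^r - K + 1) (2^c - K + 1) of the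
   numbers N_k of permutations with k X-pairs turns this into the bound. *)

Section SquaredModulus.
Variable R : rcfType.
Implicit Types u v z : R[i].

Lemma sqnorm_ge0 z : 0 <= sqnorm z.
Proof. by rewrite /sqnorm addr_ge0 // sqr_ge0. Qed.

Lemma sqnorm0 : sqnorm (0 : R[i]) = 0.
Proof. by rewrite /sqnorm /= expr0n /= addr0. Qed.

Lemma sqnorm1 : sqnorm (1 : R[i]) = 1.
Proof. by rewrite /sqnorm /= expr1n expr0n /= addr0. Qed.

Lemma sqnormN z : sqnorm (- z) = sqnorm z.
Proof. by case: z => a b; rewrite /sqnorm /= !sqrrN. Qed.

Lemma sqnorm_conjc z : (sqnorm z)%:C%C = z * conjc z.
Proof.
case: z => a b; apply/eqP; rewrite eq_complex /sqnorm /=.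
by apply/andP; split; apply/eqP; ring.
Qed.

(* The parallelogram-type bound |u + v|^2 <= (1 + 1/k) |u|^2 + (1 + k) |v|^2,
   cleared of denominators; its defect is |u - k v|^2. *)
Lemma sqnormD_weighted (k : nat) u v :
  k%:R * sqnorm (u + v) <= k.+1%:R * sqnorm u + (k * k.+1)%:R * sqnorm v.
Proof.
case: u v => [a a'] [b b']; rewrite /sqnorm /= natrM -[k.+1]addn1 natrD -subr_ge0.
set K := (k%:R : R).
have -> : (K + 1%:R) * (a ^+ 2 + a' ^+ 2) + K * (K + 1%:R) * (b ^+ 2 + b' ^+ 2) -
   K * ((a + b) ^+ 2 + (a' + b') ^+ 2) = (a - K * b) ^+ 2 + (a' - K * b') ^+ 2 by ring.
by rewrite addr_ge0 // sqr_ge0.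
Qed.

Lemma sqnormD_le u v : sqnorm (u + v) <= 2 * sqnorm u + 2 * sqnorm v.
Proof. by have := sqnormD_weighted 1 u v; rewrite mul1r. Qed.

Lemma sqnormB_le u v : sqnorm (u - v) <= 2 * sqnorm u + 2 * sqnorm v.
Proof. by rewrite -(sqnormN v) sqnormD_le. Qed.

End SquaredModulus.

Lemma reindex_involutive (I : finType) (V : nmodType) (f : I -> I) (P : pred I)
    (F : I -> V) :
  involutive f -> (forall x, P (f x) = P x) ->
  \sum_(x | P x) F (f x) = \sum_(x | P x) F x.
Proof.
move=> fK Pf; rewrite (reindex_inj (inv_inj fK)) /=.
by apply: eq_big => x; rewrite ?Pf ?fK.
Qed.

Section StateNorm.
Variables (R : rcfType) (B : finType).
Implicit Types (v : state R B) (M : op R B).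

Definition norm2 v : R := \sum_x sqnorm (v x).

Lemma norm2_conjc v : (norm2 v)%:C%C = \sum_x v x * conjc (v x).
Proof. by rewrite /norm2 rmorph_sum; apply: eq_bigr => x _; apply: sqnorm_conjc. Qed.

Lemma norm2_delta (b0 : B) : norm2 (delta R b0) = 1.
Proof.
rewrite /norm2 (bigD1 b0) //= /delta eqxx sqnorm1 big1 ?addr0 // => y ny.
by rewrite (negbTE ny) sqnorm0.
Qed.

Lemma norm2_involutive (f : B -> B) v : involutive f -> norm2 (v \o f) = norm2 v.
Proof.
by move=> fK; rewrite /norm2 (reindex_involutive (fun x => sqnorm (v x)) (P := predT)).
Qed.

Lemma unitary_norm2 M v : unitary M -> norm2 (apply_op M v) = norm2 v.
Proof.
move=> uM; apply: (@complexI R); rewrite !norm2_conjc.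
transitivity (\sum_x \sum_y \sum_y' (M x y * v y) * conjc (M x y' * v y')).
  apply: eq_bigr => x _; rewrite /apply_op rmorph_sum big_distrl /=.
  by apply: eq_bigr => y _; rewrite big_distrr.
rewrite exchange_big /=; apply: eq_bigr => y _; rewrite exchange_big /=.
have orth y' : \sum_x M x y * v y * conjc (M x y' * v y') =
               (y' == y)%:R * (v y * conjc (v y')).
  rewrite -uM big_distrl /=; apply: eq_bigr => x _; rewrite rmorphM /=; ring.
rewrite (bigD1 y) //= orth eqxx mul1r big1 ?addr0 // => y' ny'.
by rewrite orth (negbTE ny') mul0r.
Qed.

Lemma apply_opB M v w x :
  apply_op M v x - apply_op M w x = apply_op M (fun y => v y - w y) x.
Proof. by rewrite /apply_op -sumrB; apply: eq_bigr => y _; rewrite mulrBr. Qed.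

End StateNorm.

Section Oracle.
Variables (R : rcfType) (n : nat) (W : finType).
Local Notation B := (basis n W).

Lemma bxorK (b f : bs n) : bxor (bxor b f) f = b.
Proof.
apply: eq_from_tnth => i; rewrite /bxor !tnth_mktuple.
by case: (tnth b i); case: (tnth f i).
Qed.

Lemma oracle_mapK (phi : {perm bs n}) : involutive (@oracle_map n W phi).
Proof. by case=> [[[ct a] b] w] /=; rewrite bxorK. Qed.

Lemma oracle_apply (phi : {perm bs n}) (v : state R B) x :
  apply_op (@oracle_op R n W phi) v x = v (oracle_map phi x).
Proof.
rewrite /apply_op /oracle_op (bigD1 (oracle_map phi x)) //= oracle_mapK eqxx mul1r.
rewrite big1 ?addr0 // => y ny; case: eqP => [e|]; last by rewrite mul0r.
by move: ny; rewrite e oracle_mapK eqxx.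
Qed.

Variables (T : nat) (A : qalg R n W T).

Lemma run_norm2 (phi : {perm bs n}) k : (k <= T)%N -> norm2 (run A phi k) = 1.
Proof.
elim: k => [|k IH] hk /=.
  by rewrite unitary_norm2 ?norm2_delta //; apply: U_unitary.
rewrite unitary_norm2; last exact: U_unitary.
rewrite -[RHS](IH (ltnW hk)) -(norm2_involutive (run A phi k) (oracle_mapK phi)).
by apply: eq_bigr => x _; rewrite oracle_apply.
Qed.

Definition out_prob (phi : {perm bs n}) (o : bs n * bs n) : R :=
  \sum_(b | outp A b == o) sqnorm (run A phi T b).

End Oracle.

Section Hybrid.
Variables (R : rcfType) (n : nat) (W : finType) (T : nat) (A : qalg R n W T).
Variables phi phi' : {perm bs n}.

Definition run_dist k : R := \sum_x sqnorm (run A phi k x - run A phi' k x).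

Definition query_dist k : R :=
  \sum_x sqnorm (run A phi' k (oracle_map phi x) - run A phi' k (oracle_map phi' x)).

Lemma run_dist_succ k : (k < T)%N ->
  run_dist k.+1 =
  \sum_x sqnorm (run A phi k (oracle_map phi x) - run A phi' k (oracle_map phi' x)).
Proof.
move=> hk; rewrite /run_dist /=.
under eq_bigr do rewrite apply_opB.
rewrite -/(norm2 _) unitary_norm2; last exact: U_unitary.
by apply: eq_bigr => x _; rewrite !oracle_apply.
Qed.

Lemma run_dist_step k : (k < T)%N ->
  k%:R * run_dist k.+1 <= k.+1%:R * run_dist k + (k * k.+1)%:R * query_dist k.
Proof.
move=> hk; rewrite run_dist_succ // /run_dist /query_dist mulr_sumr.
rewrite -(reindex_involutive (fun x => sqnorm (run A phi k x - run A phi' k x))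
           (P := predT) (oracle_mapK phi)) //.
rewrite !mulr_sumr -big_split /=; apply: ler_sum => x _.
set u := run A phi k _ - run A phi' k (oracle_map phi x).
set v := run A phi' k (oracle_map phi x) - _.
by rewrite (_ : _ - _ = u + v); [exact: sqnormD_weighted | rewrite /u /v; ring].
Qed.

Lemma run_dist_hybrid k : (k <= T)%N -> run_dist k <= k%:R * \sum_(j < k) query_dist j.
Proof.
elim: k => [|k IH] hk.
  by rewrite /run_dist big1 ?mul0r // => x _; rewrite subrr sqnorm0.
rewrite big_ord_recr /=.
case: k IH hk => [|k] IH hk.
  by rewrite big_ord0 add0r mul1r run_dist_succ.
set S := \sum_(i < k.+1) query_dist i.
have kpos : (0 : R) < k.+1%:R by rewrite ltr0n.
rewrite -(ler_pM2l kpos); apply: (le_trans (run_dist_step hk)).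
have IHk : k.+2%:R * run_dist k.+1 <= k.+2%:R * (k.+1%:R * S).
  by rewrite ler_pM2l ?ltr0n // IH // ltnW.
apply: le_trans (lerD IHk (lexx _)) _.
rewrite (_ : _ + _ = k.+1%:R * (k.+2%:R * (S + query_dist k.+1))) //.
by rewrite natrM; ring.
Qed.

End Hybrid.

Section LocalChange.
Variables (R : rcfType) (n : nat) (W : finType) (T : nat) (A : qalg R n W T).
Variables phi phi' : {perm bs n}.
Variable cs : bool -> bs n -> bool.
Local Notation B := (basis n W).

(* [cs ct a]: the query of type ct on input a may be answered differently by
   phi and phi'. *)
Definition queried (x : B) := cs x.1.1.1 x.1.1.2.

Hypothesis oracles_agree :
  forall x : B, ~~ queried x -> oracle_map phi x = oracle_map phi' x.

Lemma queried_oracle_map (g : {perm bs n}) x : queried (oracle_map g x) = queried x.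
Proof. by case: x => [[[ct a] b] w]. Qed.

Definition query_mass k : R := \sum_(x | queried x) sqnorm (run A phi' k x).

Lemma query_dist_le k : query_dist A phi phi' k <= 4 * query_mass k.
Proof.
rewrite /query_dist (bigID queried) /= [X in _ + X]big1 ?addr0; last first.
  by move=> x /oracles_agree ->; rewrite subrr sqnorm0.
have -> : 4 * query_mass k = \sum_(x | queried x)
    (2 * sqnorm (run A phi' k (oracle_map phi x)) +
     2 * sqnorm (run A phi' k (oracle_map phi' x))).
  rewrite big_split /= -!mulr_sumr.
  rewrite !(reindex_involutive (fun x => sqnorm (run A phi' k x)) (oracle_mapK _));
    try exact: queried_oracle_map.
  by rewrite -mulrDl -natrD.
by apply: ler_sum => x _; apply: sqnormB_le.
Qed.

Lemma out_prob_le o :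
  out_prob A phi o <= 2 * out_prob A phi' o + 8 * T%:R * \sum_(j < T) query_mass j.
Proof.
have to_dist : out_prob A phi o <= 2 * out_prob A phi' o + 2 * run_dist A phi phi' T.
  rewrite /out_prob /run_dist !mulr_sumr.
  apply: (le_trans (y := \sum_(b | outp A b == o)
    (2 * sqnorm (run A phi' T b) + 2 * sqnorm (run A phi T b - run A phi' T b)))).
    apply: ler_sum => b _; rewrite -{1}[run A phi T b](subrK (run A phi' T b)) addrC.
    exact: sqnormD_le.
  rewrite big_split lerD2l /= [X in _ <= X](bigID (fun b => outp A b == o)) /= lerDl.
  by apply: sumr_ge0 => b _; rewrite mulr_ge0 // sqnorm_ge0.
apply: (le_trans to_dist); rewrite lerD2l.
have dist_le : run_dist A phi phi' T <= T%:R * (4 * \sum_(j < T) query_mass j).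
  apply: (le_trans (run_dist_hybrid A phi phi' (leqnn T))); rewrite ler_wpM2l // mulr_sumr.
  by apply: ler_sum => j _; apply: query_dist_le.
set S := \sum_(j < T) query_mass j in dist_le *.
by rewrite (_ : 8 * T%:R * S = 2 * (T%:R * (4 * S))) ?ler_wpM2l //; ring.
Qed.

End LocalChange.

Lemma sum_pair_cond_le (R : realFieldType) (I : finType) (F : I -> R) (P : rel I)
    (P1 P2 : pred I) (M : nat) :
  (forall a, 0 <= F a) -> (forall x z, P x z -> P1 x && P2 z) ->
  (forall z, P2 z -> ~~ P1 z) -> (#|P1| <= M)%N -> (#|P2| <= M)%N ->
  \sum_x \sum_z (if P x z then F x + F z else 0) <= M%:R * \sum_a F a.
Proof.
move=> F0 sP disj12 card1 card2.
have F_ge0 (Q : pred I) : 0 <= \sum_(a | Q a) F a by apply: sumr_ge0.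
apply: (le_trans (y := \sum_(x | P1 x) \sum_(z | P2 z) (F x + F z))).
  rewrite [X in _ <= X]big_mkcond /=; apply: ler_sum => x _.
  case P1x: (P1 x); last first.
    by rewrite big1 // => z _; case Pxz: (P x z) => //; move: (sP x z Pxz); rewrite P1x.
  rewrite [X in _ <= X]big_mkcond /=; apply: ler_sum => z _.
  case Pxz: (P x z); first by move: (sP _ _ Pxz) => /andP[_ ->].
  by case: (P2 z); rewrite // addr_ge0.
have -> : \sum_(x | P1 x) \sum_(z | P2 z) (F x + F z) =
    #|P2|%:R * \sum_(x | P1 x) F x + #|P1|%:R * \sum_(z | P2 z) F z.
  under eq_bigr do rewrite big_split /= sumr_const.
  by rewrite big_split /= sumr_const sumrMnl !mulr_natl.
apply: (le_trans (y := M%:R * \sum_(x | P1 x) F x + M%:R * \sum_(z | P2 z) F z)).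
  by apply: lerD; apply: ler_wpM2r; rewrite // ler_nat.
rewrite -mulrDr ler_wpM2l // (bigID P1 predT) /= lerD2l.
rewrite [X in _ <= X]big_mkcond [X in X <= _]big_mkcond /=; apply: ler_sum => z _.
by case P2z: (P2 z); rewrite ?(disj12 _ P2z) //; case: (~~ P1 z).
Qed.

Section Transposition.
Variables (R : rcfType) (n : nat) (W : finType) (T : nat) (A : qalg R n W T).
Variable f : {perm bs n}.
Local Notation B := (basis n W).

(* Queries on which f and (tperm x z * f) may differ. *)
Definition swap_queried (x z : bs n) (ct : bool) (a : bs n) : bool :=
  if ct then (a == f x) || (a == f z) else (a == x) || (a == z).

Lemma oracle_map_tperm x z (b : B) :
  ~~ queried (swap_queried x z) b -> oracle_map (tperm x z * f)%g b = oracle_map f b.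
Proof.
case: b => [[[ct a] b] w]; rewrite /queried /swap_queried /=.
case: ct => /norP [na1 na2] /=; last by rewrite permM tpermD // eq_sym.
rewrite invMg tpermV permM tpermD //.
  by apply: contra na1 => /eqP ->; rewrite permKV.
by apply: contra na2 => /eqP ->; rewrite permKV.
Qed.

(* An inverse query on f a counts as a query on a. *)
Definition queries_at (a : bs n) (b : B) : bool :=
  if b.1.1.1 then b.1.1.2 == f a else b.1.1.2 == a.

Definition query_weight j (a : bs n) : R :=
  \sum_(b | queries_at a b) sqnorm (run A f j b).

Lemma out_prob_ge0 o : 0 <= out_prob A f o.
Proof. by apply: sumr_ge0 => b _; apply: sqnorm_ge0. Qed.

Lemma query_weight_ge0 j a : 0 <= query_weight j a.
Proof. by apply: sumr_ge0 => b _; apply: sqnorm_ge0. Qed.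

Lemma query_mass_swap j x z :
  query_mass A f (swap_queried x z) j <= query_weight j x + query_weight j z.
Proof.
rewrite /query_mass /query_weight big_mkcond.
rewrite [X in _ <= X + _]big_mkcond [X in _ <= _ + X]big_mkcond -big_split /=.
apply: ler_sum => b _; have := sqnorm_ge0 (run A f j b).
rewrite /queried /swap_queried /queries_at.
by case: (b.1.1.1); case: (_ == _); case: (_ == _) => //=; rewrite ?addr0 ?add0r ?lerDl.
Qed.

Lemma sum_if_perm (g : {perm bs n}) (y : bs n) (F : R) :
  \sum_a (if y == g a then F else 0) = F.
Proof.
rewrite (reindex_inj (@perm_inj _ (g^-1)%g)) /= (bigD1 y) //= permKV eqxx.
by rewrite big1 ?addr0 // => a na; rewrite permKV eq_sym (negbTE na).
Qed.

Lemma sum_query_weight j : (j <= T)%N -> \sum_a query_weight j a = 1.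
Proof.
move=> hj; rewrite -(run_norm2 A f hj) /query_weight /norm2.
under eq_bigr do rewrite big_mkcond /=.
rewrite exchange_big /=; apply: eq_bigr => b _; rewrite /queries_at.
case: (b.1.1.1); first exact: sum_if_perm.
by rewrite -[RHS](sum_if_perm 1%g b.1.1.2); apply: eq_bigr => a _; rewrite perm1.
Qed.

Lemma sum_out_prob : \sum_x \sum_z out_prob A f (x, f z) = 1.
Proof.
rewrite -(run_norm2 A f (leqnn T)) /out_prob /norm2.
under eq_bigr do under eq_bigr do rewrite big_mkcond /=.
under eq_bigr do rewrite exchange_big /=.
rewrite exchange_big /=; apply: eq_bigr => b _; case: (outp A b) => o1 o2.
rewrite (bigD1 o1) //= [X in _ + X]big1 ?addr0 => [|x nx]; last first.
  by apply: big1 => z _; rewrite xpair_eqE eq_sym (negbTE nx).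
by under eq_bigr do rewrite xpair_eqE eqxx /=; apply: sum_if_perm.
Qed.

Lemma sum_out_prob_tperm (P : rel (bs n)) (P1 P2 : pred (bs n)) (M : nat) :
  (forall x z, P x z -> P1 x && P2 z) -> (forall z, P2 z -> ~~ P1 z) ->
  (#|P1| <= M)%N -> (#|P2| <= M)%N ->
  \sum_x \sum_z (if P x z then out_prob A (tperm x z * f)%g (x, f z) else 0)
  <= 2 + 8 * T%:R * T%:R * M%:R.
Proof.
move=> sP disj12 card1 card2.
pose G x z := 2 * out_prob A f (x, f z) +
  8 * T%:R * \sum_(j < T) (query_weight j x + query_weight j z).
have le_G x z : out_prob A (tperm x z * f)%g (x, f z) <= G x z.
  apply: le_trans (out_prob_le A (@oracle_map_tperm x z) _) _.
  rewrite lerD2l ler_wpM2l ?mulr_ge0 //; apply: ler_sum => j _.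
  exact: query_mass_swap.
apply: (le_trans (y := \sum_x \sum_z (if P x z then G x z else 0))).
  by do 2![apply: ler_sum => ? _]; case: ifP.
have splitG x z : (if P x z then G x z else 0) =
    (if P x z then 2 * out_prob A f (x, f z) else 0) +
    8 * T%:R * \sum_(j < T) (if P x z then query_weight j x + query_weight j z else 0).
  by case: (P x z); rewrite //= big1_eq mulr0 addr0.
under eq_bigr do under eq_bigr do rewrite splitG.
under eq_bigr do rewrite big_split /=.
rewrite big_split /=; apply: lerD.
  apply: (le_trans (y := 2 * \sum_x \sum_z out_prob A f (x, f z))); last first.
    by rewrite sum_out_prob mulr1.
  rewrite mulr_sumr; apply: ler_sum => x _.
  rewrite mulr_sumr; apply: ler_sum => z _.
  by case: ifP => // _; rewrite mulr_ge0 ?out_prob_ge0.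
under eq_bigr do rewrite -mulr_sumr.
rewrite -mulr_sumr -[8 * T%:R * T%:R * M%:R]mulrA ler_wpM2l ?mulr_ge0 //.
under eq_bigr do rewrite exchange_big /=.
rewrite exchange_big /=.
apply: (le_trans (y := \sum_(j < T) M%:R * \sum_a query_weight j a)).
  apply: ler_sum => j _; apply: sum_pair_cond_le sP disj12 card1 card2 => a.
  exact: query_weight_ge0.
under eq_bigr => j _ do rewrite sum_query_weight ?mulr1 1?ltnW //.
by rewrite sumr_const card_ord mulr_natl.
Qed.

End Transposition.

Section XpairCounting.
Variables r c : nat.
Local Notation n := (r + c)%N.
Local Notation X1 := (@inX1 r c).
Local Notation X2 := (@inX2 r c).
Implicit Types f g : {perm bs n}.

Definition nperm_Xpairs k := #|[set f : {perm bs n} | numXpairs f == k]|.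

Lemma card_X1 : #|[set x : bs n | X1 x]| = (2 ^ r)%N.
Proof.
apply/eqP; rewrite eqn_leq; apply/andP; split.
  have take_inj : {in [set x | X1 x] &, injective (fun x : bs n => take_tuple r x)}.
    move=> x y; rewrite !inE => /eqP x1 /eqP y1 /(congr1 val) /= xy.
    by apply: val_inj; rewrite /= -(cat_take_drop r x) -(cat_take_drop r y) xy x1 y1.
  rewrite -(card_in_imset take_inj) (leq_trans (subset_leq_card (subsetT _))) //.
  by rewrite cardsT card_tuple card_bool (minn_idPl (leq_addr c r)).
pose pad (t : r.-tuple bool) : bs n := [tuple of t ++ nseq c false].
have pad_inj : injective pad.
  move=> t1 t2 /(congr1 (fun x : bs n => take r x)) /=.
  by rewrite !take_size_cat ?size_tuple // => /val_inj.
rewrite -[X in (X ^ r)%N]card_bool -card_tuple -cardsT -(card_imset _ pad_inj).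
apply/subset_leq_card/subsetP => x /imsetP [t _ ->].
by rewrite inE /inX1 /= drop_size_cat ?size_tuple.
Qed.

Lemma card_X2 : #|[set y : bs n | X2 y]| = (2 ^ c)%N.
Proof.
apply/eqP; rewrite eqn_leq; apply/andP; split.
  have drop_inj : {in [set y | X2 y] &, injective (fun y : bs n => drop_tuple r y)}.
    move=> x y; rewrite !inE => /eqP x2 /eqP y2 /(congr1 val) /= xy.
    by apply: val_inj; rewrite /= -(cat_take_drop r x) -(cat_take_drop r y) xy x2 y2.
  rewrite -(card_in_imset drop_inj) (leq_trans (subset_leq_card (subsetT _))) //.
  by rewrite cardsT card_tuple card_bool addKn.
pose pad (t : c.-tuple bool) : bs n := [tuple of nseq r false ++ t].
have pad_inj : injective pad.
  move=> t1 t2 /(congr1 (fun x : bs n => drop r x)) /=.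
  by rewrite !drop_size_cat ?size_nseq // => /val_inj.
rewrite -[X in (X ^ c)%N]card_bool -card_tuple -cardsT -(card_imset _ pad_inj).
apply/subset_leq_card/subsetP => y /imsetP [t _ ->].
by rewrite inE /inX2 /= take_size_cat ?size_nseq.
Qed.

Lemma card_preim_X2 f : #|[set z | X2 (f z)]| = (2 ^ c)%N.
Proof.
rewrite -card_X2 -[RHS](card_preimset _ (@perm_inj _ f)).
by apply: eq_card => z; rewrite !inE.
Qed.

Lemma card_X1_notX2 f : (#|[set x | X1 x && ~~ X2 (f x)]| + numXpairs f = 2 ^ r)%N.
Proof.
rewrite -card_X1 -(cardsID [set z | X2 (f z)] [set x | X1 x]) addnC /numXpairs.
by congr (_ + _)%N; apply: eq_card => z; rewrite !inE andbC.
Qed.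

Lemma card_notX1_X2 f : (#|[set z | ~~ X1 z && X2 (f z)]| + numXpairs f = 2 ^ c)%N.
Proof.
rewrite -(card_preim_X2 f) -(cardsID [set x | X1 x] [set z | X2 (f z)]) addnC /numXpairs.
by congr (_ + _)%N; apply: eq_card => z; rewrite !inE andbC.
Qed.

Lemma card_notX1_notX2 f :
  (#|[set z | ~~ X1 z && ~~ X2 (f z)]| + 2 ^ r + 2 ^ c = 2 ^ n + numXpairs f)%N.
Proof.
rewrite -card_X1 -(card_preim_X2 f) /numXpairs.
have -> : [set z | ~~ X1 z && ~~ X2 (f z)] = ~: ([set x | X1 x] :|: [set z | X2 (f z)]).
  by apply/setP => z; rewrite !inE negb_or.
have -> : [set x | X1 x && X2 (f x)] = [set x | X1 x] :&: [set z | X2 (f z)].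
  by apply/setP => z; rewrite !inE.
rewrite -addnA -cardsUI addnA [(#|~: _| + _)%N]addnC cardsC.
by rewrite card_tuple card_bool.
Qed.

End XpairCounting.

Section XpairSwap.
Variables r c : nat.
Local Notation n := (r + c)%N.
Local Notation X1 := (@inX1 r c).
Local Notation X2 := (@inX2 r c).
Implicit Types f g : {perm bs n}.

Definition destroys_Xpair f (x z : bs n) := [&& X1 x, X2 (f x), ~~ X1 z & ~~ X2 (f z)].
Definition creates_Xpair g (x z : bs n) := [&& X1 x, ~~ X2 (g x), ~~ X1 z & X2 (g z)].

Lemma destroys_Xpair_tperm g x z :
  destroys_Xpair (tperm x z * g)%g x z = creates_Xpair g x z.
Proof.
rewrite /destroys_Xpair /creates_Xpair !permM tpermL tpermR.
by case: (X1 x); case: (X1 z); case: (X2 (g x)); case: (X2 (g z)).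
Qed.

Lemma numXpairs_tperm g x z :
  creates_Xpair g x z -> numXpairs (tperm x z * g)%g = (numXpairs g).+1.
Proof.
case/and4P=> x1 nx2 nz1 z2; rewrite /numXpairs.
have -> : [set a | X1 a && X2 ((tperm x z * g)%g a)] = x |: [set a | X1 a && X2 (g a)].
  apply/setP => a; rewrite !inE permM.
  have [->|ax] := eqVneq a x; first by rewrite tpermL x1 z2.
  have [->|az] := eqVneq a z; first by rewrite tpermR (negbTE nz1).
  by rewrite tpermD // eq_sym.
by rewrite cardsU1 inE x1 (negbTE nx2).
Qed.

(* Every pair (f, destroyed X-pair) arises uniquely from a permutation with one
   X-pair fewer by swapping the images of x and z. *)
Lemma sum_destroys_Xpair (V : nmodType) (K : nat) (G : {perm bs n} -> bs n -> bs n -> V) :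
  (0 < K)%N ->
  \sum_(f | numXpairs f == K) \sum_x \sum_z (if destroys_Xpair f x z then G f x z else 0) =
  \sum_(g | numXpairs g == K.-1) \sum_x \sum_z
    (if creates_Xpair g x z then G (tperm x z * g)%g x z else 0).
Proof.
move=> K_gt0.
have swap_sums (C : pred {perm bs n}) (D : {perm bs n} -> rel (bs n)) F :
  \sum_(f | C f) \sum_x \sum_z (if D f x z then F f x z else 0) =
  \sum_x \sum_z \sum_f (if C f && D f x z then F f x z else 0) :> V.
  rewrite big_mkcond (eq_bigr (fun f => \sum_x \sum_z
    (if C f && D f x z then F f x z else 0))) => [|f _]; last first.
    by case: (C f); rewrite //= big1 // => x _; rewrite big1.
  by rewrite exchange_big /=; apply: eq_bigr => x _; apply: exchange_big.
rewrite !swap_sums; apply: eq_bigr => x _; apply: eq_bigr => z _.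
rewrite (reindex_inj (mulgI (tperm x z))) /=; apply: eq_bigr => g _.
rewrite destroys_Xpair_tperm; case cxz: (creates_Xpair g x z); rewrite ?andbF ?andbT //.
by rewrite numXpairs_tperm //; case: K K_gt0.
Qed.

End XpairSwap.

Lemma sum_prod_cond (R : nzSemiRingType) (I J : finType) (P : pred I) (Q : pred J)
    (F : I -> R) :
  \sum_x \sum_z (if P x && Q z then F x else 0) = #|Q|%:R * \sum_(x | P x) F x.
Proof.
rewrite mulr_sumr [RHS]big_mkcond /=; apply: eq_bigr => x _.
case: (P x) => /=; last by rewrite big1 ?mulr0.
by rewrite -big_mkcond sumr_const mulr_natl.
Qed.

Section AverageSuccess.
Variables (R : rcfType) (r c K : nat) (W : finType) (T : nat) (A : qalg R (r + c) W T).
Local Notation n := (r + c)%N.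
Local Notation X1 := (@inX1 r c).
Local Notation X2 := (@inX2 r c).
Implicit Types f g : {perm bs n}.

Lemma succ_prob_out_prob f :
  succ_prob A f = \sum_(x | X1 x && X2 (f x)) out_prob A f (x, f x).
Proof.
rewrite /succ_prob /out_prob big_mkcond [RHS]big_mkcond /=.
rewrite [RHS](eq_bigr (fun x => \sum_b (if (X1 x && X2 (f x)) && (outp A b == (x, f x))
    then sqnorm (run A f T b) else 0))) => [|x _]; last first.
  by case: (X1 x && X2 (f x)) => /=; [apply: big_mkcond | rewrite big1].
rewrite [RHS]exchange_big /=; apply: eq_bigr => b _.
case: (outp A b) => o1 o2.
rewrite [RHS](bigD1 o1) //= [X in _ = _ + X]big1 ?addr0 => [|x nx]; last first.
  by rewrite xpair_eqE eq_sym (negbTE nx) andbF.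
rewrite /Xpair /= xpair_eqE eqxx [o2 == _]eq_sym.
by case: eqP => [<-|_]; rewrite /= ?andbT ?andbF.
Qed.

Lemma succ_prob_le1 f : succ_prob A f <= 1.
Proof.
rewrite /succ_prob -(run_norm2 A f (leqnn T)) /norm2.
rewrite [X in _ <= X](bigID (fun x => Xpair f (outp A x))) /= lerDl.
by apply: sumr_ge0 => x _; apply: sqnorm_ge0.
Qed.

Lemma avg_succ_prob_le1 : avg_succ_prob K A <= 1.
Proof.
rewrite /avg_succ_prob -/(nperm_Xpairs r c K).
have [->|d_gt0] := posnP (nperm_Xpairs r c K); first by rewrite invr0 mulr0.
rewrite ler_pdivrMr ?ltr0n // mul1r.
apply: (le_trans (y := \sum_(f | numXpairs f == K) (1 : R))).
  by apply: ler_sum => f _; apply: succ_prob_le1.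
by rewrite sumr_const -mulr_natl mulr1 ler_nat; apply/eq_leq/eq_card => f; rewrite inE.
Qed.

End AverageSuccess.

Section AverageSuccessBound.
Variables (R : rcfType) (r c K : nat) (W : finType) (T : nat) (A : qalg R (r + c) W T).
Hypothesis K_gt0 : (0 < K)%N.
Local Notation n := (r + c)%N.
Local Notation X1 := (@inX1 r c).
Local Notation X2 := (@inX2 r c).
Implicit Types f g : {perm bs n}.

(* The number of points outside X1 whose image lies outside X2, which depends
   only on the number of X-pairs. *)
Let Z := (2 ^ n + K - 2 ^ r - 2 ^ c)%N.

Lemma sum_destroys_Xpair_const f (F : bs n -> R) : numXpairs f = K ->
  \sum_x \sum_z (if destroys_Xpair f x z then F x else 0) =
  Z%:R * \sum_(x | X1 x && X2 (f x)) F x.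
Proof.
move=> fK; under eq_bigr do under eq_bigr do rewrite /destroys_Xpair andbA.
rewrite (sum_prod_cond _ (fun z => ~~ X1 z && ~~ X2 (f z))); congr (_%:R * _).
have := card_notX1_notX2 f; rewrite fK /Z => <-; rewrite -subnDA -addnA addnK.
by apply: eq_card => z; rewrite inE.
Qed.

Lemma sum_creates_Xpair_const g :
  \sum_x \sum_z (if creates_Xpair g x z then 1 else 0) =
  (2 ^ r - numXpairs g)%N%:R * (2 ^ c - numXpairs g)%N%:R :> R.
Proof.
under eq_bigr do under eq_bigr do rewrite /creates_Xpair andbA.
rewrite (sum_prod_cond _ (fun z => ~~ X1 z && X2 (g z))) sumr_const.
rewrite -mulr_natl mulr1 mulrC.
rewrite -(card_X1_notX2 g) -(card_notX1_X2 g) !addnK.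
by congr (_%:R * _%:R); apply: eq_card => z; rewrite inE.
Qed.

Lemma nperm_Xpairs_rec :
  Z%:R * K%:R * (nperm_Xpairs r c K)%:R =
  (nperm_Xpairs r c K.-1)%:R * ((2 ^ r - K.-1)%N%:R * (2 ^ c - K.-1)%N%:R) :> R.
Proof.
transitivity (\sum_(f : {perm bs n} | numXpairs f == K) (Z%:R * K%:R : R)).
  rewrite sumr_const -[_ *+ #|_|]mulr_natr; congr (_ * _%:R).
  by apply: eq_card => f; rewrite inE.
transitivity (\sum_(f : {perm bs n} | numXpairs f == K)
    \sum_x \sum_z (if destroys_Xpair f x z then 1 else 0) : R).
  apply: eq_bigr => f /eqP fK.
  rewrite sum_destroys_Xpair_const // sumr_const -[_ *+ #|_|]mulr_natr mul1r.
  by congr (_ * _%:R); rewrite -fK; apply: eq_card => x; rewrite inE.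
rewrite (sum_destroys_Xpair (fun _ _ _ => 1)) //.
transitivity (\sum_(g : {perm bs n} | numXpairs g == K.-1)
    ((2 ^ r - K.-1)%N%:R * (2 ^ c - K.-1)%N%:R : R)).
  by apply: eq_bigr => g /eqP gK; rewrite sum_creates_Xpair_const gK.
rewrite sumr_const -[_ *+ #|_|]mulr_natl; congr (_%:R * _).
by apply: eq_card => g; rewrite inE.
Qed.

Lemma sum_succ_prob_le :
  Z%:R * \sum_(f : {perm bs n} | numXpairs f == K) succ_prob A f <=
  (nperm_Xpairs r c K.-1)%:R * (2 + 8 * T%:R * T%:R * (2 ^ maxn r c)%:R).
Proof.
rewrite mulr_sumr.
under eq_bigr => f /eqP fK do
  rewrite succ_prob_out_prob -(sum_destroys_Xpair_const (fun x => out_prob A f (x, f x))) //.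
rewrite (sum_destroys_Xpair (fun f x _ => out_prob A f (x, f x))) //.
apply: (le_trans (y := \sum_(g : {perm bs n} | numXpairs g == K.-1)
                          (2 + 8 * T%:R * T%:R * (2 ^ maxn r c)%:R))); last first.
  rewrite sumr_const -[_ *+ #|_|]mulr_natl.
  rewrite [X in X%:R * _](_ : _ = nperm_Xpairs r c K.-1) //.
  by apply: eq_card => g; rewrite inE.
apply: ler_sum => g _.
under eq_bigr do under eq_bigr do rewrite permM tpermL.
apply: (sum_out_prob_tperm A g (P1 := X1) (P2 := fun z => ~~ X1 z && X2 (g z))).
- by move=> x z /and4P [-> _ -> ->].
- by move=> z /andP [].
- apply: (@leq_trans (2 ^ r)); last by rewrite leq_exp2l ?leq_maxl.
  by rewrite -(card_X1 r c); apply/eq_leq/eq_card => x; rewrite inE.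
- apply: (@leq_trans (2 ^ c)); last by rewrite leq_exp2l ?leq_maxr.
  rewrite -(card_notX1_X2 g) (leq_trans _ (leq_addr _ _)) //.
  by apply/eq_leq/eq_card => z; rewrite inE.
Qed.

End AverageSuccessBound.

Lemma exp2_addn_le (r c : nat) :
  (0 < r)%N -> (0 < c)%N -> (2 ^ r + 2 ^ c <= 2 ^ (r + c))%N.
Proof.
move=> r_gt0 c_gt0; rewrite expnD.
have : (2 <= 2 ^ r)%N by rewrite -{1}(expn1 2) leq_exp2l.
have : (2 <= 2 ^ c)%N by rewrite -{1}(expn1 2) leq_exp2l.
nia.
Qed.

Lemma ratio_arith_le (F : realFieldType) (k t m M : F) :
  1 <= k -> 0 <= t -> 8 * k * (t + 1) ^+ 2 < m -> m <= M ->
  k * (2 + 8 * t * t * M) / ((m - k + 1) * (M - k + 1)) <= 8 * (t + 1) ^+ 2 * k / m.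
Proof.
move=> k1 t0 km mM.
have t1 : 1 <= (t + 1) ^+ 2 by nra.
have m8 : 8 * k < m by nra.
have m_gt0 : 0 < m by lra.
have den_gt0 : 0 < (m - k + 1) * (M - k + 1) by apply: mulr_gt0; lra.
rewrite ler_pdivrMr // [X in _ <= X]mulrAC ler_pdivlMr //.
rewrite (_ : k * _ * m = k * ((2 + 8 * t * t * M) * m)); last by ring.
rewrite (_ : 8 * _ * k * _ = k * (8 * (t + 1) ^+ 2 * ((m - k + 1) * (M - k + 1))));
  last by ring.
rewrite ler_pM2l; last by lra.
have den_ge : m * M - 2 * k * M <= (m - k + 1) * (M - k + 1) by nra.
have h1 : 8 * (t + 1) ^+ 2 * (m * M - 2 * k * M) <=
          8 * (t + 1) ^+ 2 * ((m - k + 1) * (M - k + 1)).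
  by rewrite ler_pM2l //; lra.
apply: le_trans h1; rewrite mulrC.
have kM : 16 * k * (t + 1) ^+ 2 * M <= 2 * m * M by nra.
have tmM : 0 <= 16 * t * (m * M) by rewrite !mulr_ge0 //; lra.
nra.
Qed.

Section AverageSuccessRatio.
Variables (R : rcfType) (r c K : nat) (W : finType) (T : nat) (A : qalg R (r + c) W T).
Hypotheses (r_gt0 : (0 < r)%N) (c_gt0 : (0 < c)%N).
Hypotheses (K_gt0 : (0 < K)%N) (K_le : (K <= 2 ^ minn r c)%N).

Lemma mul_exp2_subn_minmax :
  ((2 ^ r - K.-1)%N%:R * (2 ^ c - K.-1)%N%:R : R) =
  ((2 ^ minn r c)%:R - K%:R + 1) * ((2 ^ maxn r c)%:R - K%:R + 1).
Proof.
have Kr : (K.-1 <= 2 ^ r)%N.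
  by rewrite (leq_trans (leq_pred K)) // (leq_trans K_le) // leq_exp2l ?geq_minl.
have Kc : (K.-1 <= 2 ^ c)%N.
  by rewrite (leq_trans (leq_pred K)) // (leq_trans K_le) // leq_exp2l ?geq_minr.
rewrite !natrB // -[in RHS](prednK K_gt0) -[K.-1.+1]addn1 natrD.
by case: leqP => _; ring.
Qed.

Lemma avg_succ_prob_le_ratio :
  avg_succ_prob K A <=
  K%:R * (2 + 8 * T%:R * T%:R * (2 ^ maxn r c)%:R) /
  (((2 ^ minn r c)%:R - K%:R + 1) * ((2 ^ maxn r c)%:R - K%:R + 1)).
Proof.
have := nperm_Xpairs_rec R r c K_gt0; have := sum_succ_prob_le A K_gt0.
rewrite mul_exp2_subn_minmax /avg_succ_prob /nperm_Xpairs.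
set Z := (_ - _ - _)%N; set S := \sum_(f | _) _; set C := 2 + _.
set a := (_ - _ + 1) * _; set dprev := #|_|; set d := #|_|.
move=> hS hd.
have Z_gt0 : (0 : R) < Z%:R.
  by rewrite ltr0n /Z; move: (exp2_addn_le r_gt0 c_gt0); lia.
have Km : (K%:R : R) <= (2 ^ minn r c)%:R by rewrite ler_nat.
have mM : ((2 ^ minn r c)%:R : R) <= (2 ^ maxn r c)%:R.
  by rewrite ler_nat leq_exp2l // (leq_trans (geq_minl r c)) ?leq_maxl.
have a_gt0 : 0 < a by apply: mulr_gt0; lra.
have C_ge0 : 0 <= C by rewrite addr_ge0 ?mulr_ge0.
have [->|d_gt0] := posnP d.
  by rewrite mulr0n invr0 mulr0; apply: divr_ge0; [apply: mulr_ge0 | apply: ltW].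
rewrite ler_pdivrMr ?ltr0n // mulrAC ler_pdivlMr // -(ler_pM2l Z_gt0).
apply: (le_trans (y := dprev%:R * C * a)); first by rewrite mulrA ler_pM2r.
rewrite (_ : dprev%:R * C * a = Z%:R * (K%:R * C * d%:R)) //.
by rewrite mulrAC -hd; ring.
Qed.

End AverageSuccessRatio.

Unset Implicit Arguments.

Theorem lemma4 (R : rcfType) (r c K T : nat) (W : finType)
  (A : qalg R (r + c) W T) (eps : R) :
  (1 <= r)%N -> (1 <= c)%N -> (1 <= K <= 2 ^ minn r c)%N ->
  eps = avg_succ_prob K A -> 0 < eps ->
  eps <= 8 * (T.+1)%:R ^+ 2 * K%:R / (2 ^ minn r c)%:R.
Proof.
move=> r_gt0 c_gt0 /andP [K_gt0 K_le] -> _.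
have m_gt0 : (0 : R) < (2 ^ minn r c)%:R by rewrite ltr0n expn_gt0.
have T1 : (T.+1)%:R = T%:R + 1 :> R by rewrite -addn1 natrD.
have [small | large] := leqP (2 ^ minn r c) (8 * K * T.+1 ^ 2).
  apply: le_trans (avg_succ_prob_le1 K A) _.
  by rewrite ler_pdivlMr // mul1r -natrX -!natrM ler_nat mulnAC.
apply: le_trans (avg_succ_prob_le_ratio A r_gt0 c_gt0 K_gt0 K_le) _.
rewrite T1; apply: ratio_arith_le.
- by rewrite ler1n.
- exact: ler0n.
- by rewrite -T1 -natrX -!natrM ltr_nat.
- by rewrite ler_nat leq_exp2l // (leq_trans (geq_minl r c)) ?leq_maxl.
Qed.
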